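(* Let $q=3^m$ with $m\ge1$ and $f(x)=x^{q+2}$ on $\mathbb{F}_{q^2}$. Then $$\sum_{a\in\mathbb{F}_{q^2},\,b\in\mathbb{F}_{q^2}^*}\big(W_f(a,b)-1\big)^3=q^2(q^2-1)(q^3-3q^2+2).$$
   Context: The Walsh transform is $W_f(a,b)=\sum_{x\in\mathbb{F}_{q^2}}\xi_3^{\mathrm{Tr}_{\mathbb{F}_{q^2}/\mathbb{F}_3}(bf(x)-ax)}$ with $\xi_3=e^{2\pi i/3}$ and $\mathrm{Tr}_{\mathbb{F}_{q^2}/\mathbb{F}_3}$ the absolute trace. *)

From mathcomp Require Import all_boot all_order all_algebra all_field.
Set Implicit Arguments. Unset Strict Implicit. Unset Printing Implicit Defensive.
Import Order.TTheory GRing.Theory Num.Theory.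
Local Open Scope ring_scope.

Definition xi3 : algC := (-1 + 'i * sqrtC 3%:R) / 2%:R.

(* absolute trace F -> F_3 (values in the prime subfield of F),
   Tr(x) = sum_{i < n} x^(3^i) where #|F| = 3^n *)
Definition absTr (F : finFieldType) (x : F) : F :=
  \sum_(i < logn 3 #|F|) x ^+ (3 ^ i).

(* additive character y |-> xi3 ^ Tr(y); Tr(y) lies in F_3 = {0,1,2},
   identified with the k < 3 such that k%:R = Tr(y) in F *)
Definition chi3 (F : finFieldType) (y : F) : algC :=
  \sum_(k < 3 | (k%:R : F) == absTr y) xi3 ^+ k.

Definition walsh (F : finFieldType) (f : F -> F) (a b : F) : algC :=
  \sum_(x : F) chi3 (b * f x - a * x).

From mathcomp Require Import all_boot all_order all_algebra all_field.
From mathcomp Require Import cyclic ring.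
Import GRing.Theory Num.Theory.
Local Open Scope ring_scope.
Set Implicit Arguments. Unset Strict Implicit. Unset Printing Implicit Defensive.

(* Write Q = q^2 = #|F| and chi for the additive character xi3^Tr. By the
   orthogonality of chi, for an odd f with f 0 = 0 the moments of a |-> W_f(a,b)
   are sum_a W = Q, sum_a W^2 = Q^2 and
   sum_a W^3 = Q * sum_{x,y} chi(b (f x + f y - f (x + y))).
   Summed over b <> 0, the last one counts the zeros of the defect
   f x + f y - f (x + y), which for f = x^(q+2) in characteristic 3 factors as
   x y (x - y) (x^(q-1) - y^(q-1)); it has Q + (Q - 1) q zeros, because for
   x <> 0 the equation y^(q-1) = x^(q-1) has q - 1 solutions.  Expanding
   (W - 1)^3 and collecting terms gives the formula. *)

Lemma natr_eq_mod_pchar (R : nzRingType) p i j : p \in [pchar R] ->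
  ((i%:R : R) == j%:R) = (i == j %[mod p]).
Proof.
move=> charRp; wlog le_ij : i j / (i <= j)%N => [hwlog|].
  by case: (leqP i j) => [|/ltnW] /hwlog //; rewrite eq_sym [in RHS]eq_sym.
by rewrite eq_sym -subr_eq0 -natrB // -(dvdn_pcharf charRp) eq_sym eqn_mod_dvd.
Qed.

Lemma sum_if_add_eq0 (T : finZmodType) (V : nmodType) (G : T -> V) (x : T) :
  \sum_y (if x + y == 0 then G y else 0) = G (- x).
Proof. by rewrite -big_mkcond (big_pred1 (- x)) // => y; rewrite addrC addr_eq0. Qed.

Lemma xi3_cube : xi3 ^+ 3 = 1.
Proof.
rewrite /xi3; have := sqrCi algC; have := sqrtCK (3%:R : algC).
move: ('i) (sqrtC _) => i s s2 i2.
have -> : ((-1 + i * s) / 2%:R) ^+ 3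
    = (-1 - 3%:R * (i ^+ 2 * s ^+ 2) + (3%:R + i ^+ 2 * s ^+ 2) * (i * s)) / 8%:R.
  by field.
by rewrite i2 s2; field.
Qed.

Lemma xi3_neq1 : xi3 != 1.
Proof.
have twice_xi3 : 2%:R * xi3 + 1 = 'i * sqrtC 3%:R.
  by rewrite /xi3 mulrC divfK ?pnatr_eq0 //; ring.
apply/eqP => /(congr1 (fun z => (2%:R * z + 1) ^+ 2)) /eqP.
rewrite twice_xi3 exprMn sqrCi sqrtCK -subr_eq0.
have -> : -1 * 3%:R - (2%:R * 1 + 1) ^+ 2 = - (12%:R : algC) by ring.
by rewrite oppr_eq0 pnatr_eq0.
Qed.

Lemma xi3_prim : 3.-primitive_root xi3.
Proof.
have [k prim_k] := prim_order_exists (isT : (0 < 3)%N) xi3_cube.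
case: k prim_k => [|[|[|[|k]]]] // prim_k _.
by have := prim_expr_order prim_k; rewrite expr1 => /eqP; rewrite (negbTE xi3_neq1).
Qed.

Section CharThree.

Variable R : idomainType.
Hypothesis charR3 : 3 \in [pchar R].

Lemma expr3nD (x y : R) i : (x + y) ^+ (3 ^ i) = x ^+ (3 ^ i) + y ^+ (3 ^ i).
Proof. by apply: exprDn_pchar; rewrite (eq_pnat _ (pcharf_eq charR3)) pnatX pnat_id. Qed.

Lemma power_map_defect m (x y : R) :
  x ^+ (3 ^ m + 2) + y ^+ (3 ^ m + 2) - (x + y) ^+ (3 ^ m + 2)
  = x * y * (x - y) * (x ^+ (3 ^ m).-1 - y ^+ (3 ^ m).-1).
Proof.
rewrite !exprD expr3nD -(prednK (expn_gt0 3 m)) !exprSr.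
move: (x ^+ _) (y ^+ _) => u v.
transitivity (x * y * (x - y) * (u - v) - 3%:R * (x ^+ 2 * y * u + x * y ^+ 2 * v)).
  by ring.
by rewrite (pcharf0 charR3) mul0r subr0.
Qed.

Lemma power_map_defect_eq0 m (x y : R) :
  (x ^+ (3 ^ m + 2) + y ^+ (3 ^ m + 2) - (x + y) ^+ (3 ^ m + 2) == 0)
  = [|| x == 0, y == 0 | x ^+ (3 ^ m).-1 == y ^+ (3 ^ m).-1].
Proof.
rewrite power_map_defect !mulf_eq0 !subr_eq0 -!orbA.
by have [->|] := eqVneq x y; rewrite ?eqxx ?orbT ?orbF.
Qed.

End CharThree.

Section UnityRoots.

Variables (F : finFieldType) (d : nat).
Hypotheses (d_gt0 : (0 < d)%N) (d_dvd : (d %| #|F|.-1)%N).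

Lemma finField_prim_root : exists z : F, (#|F|.-1).-primitive_root z.
Proof.
have expf_card_pred (x : F) : x != 0 -> x ^+ #|F|.-1 = 1.
  move=> x_neq0; apply: (mulfI x_neq0).
  by rewrite -exprS (ltn_predK (finNzRing_gt1 F)) expf_card mulr1.
have /hasP[z _ prim_z] : has (#|F|.-1).-primitive_root (enum [pred x : F | x != 0]).
  apply: has_prim_root; rewrite ?enum_uniq -?cardE ?cardC1 //.
    by rewrite -subn1 subn_gt0 finNzRing_gt1.
  by apply/allP => x; rewrite mem_enum => /expf_card_pred/unity_rootP.
by exists z.
Qed.

Lemma card_unity_roots : #|[pred t : F | t ^+ d == 1]| = d.
Proof.
have [z prim_z] := finField_prim_root.
have prim_w := dvdn_prim_root prim_z d_dvd; set w := z ^+ _ in prim_w.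
have w_inj : injective (fun i : 'I_d => w ^+ i).
  by move=> i j /eqP; rewrite (eq_prim_root_expr prim_w) !modn_small // => /eqP/val_inj.
rewrite -[RHS]card_ord -(card_imset _ w_inj); apply: eq_card => t; rewrite !inE.
apply/eqP/imsetP => [/(prim_rootP prim_w) [i ->]|[i _ ->]]; first by exists i.
by rewrite -exprM mulnC exprM (prim_expr_order prim_w) expr1n.
Qed.

Lemma card_expr_eq (x : F) : x != 0 -> #|[pred y : F | y ^+ d == x ^+ d]| = d.
Proof.
move=> x_neq0; rewrite -[RHS]card_unity_roots -[RHS](card_image (mulIf x_neq0)).
apply: eq_card => y; rewrite inE; apply/idP/imageP => [/eqP yx|[t /eqP t1 ->]].
  exists (y / x); last by rewrite divfK.
  by rewrite inE expr_div_n yx divff // expf_neq0.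
by rewrite exprMn t1 mul1r.
Qed.

Lemma sum_card_zero_or_expr_eq :
  \sum_(x : F) #|[pred y : F | [|| x == 0, y == 0 | x ^+ d == y ^+ d]]|
  = (#|F| + #|F|.-1 * d.+1)%N.
Proof.
rewrite (bigD1 0) //= (eq_bigr (fun=> d.+1)) => [|x x_neq0].
  rewrite sum_nat_const cardC1 mulnC; congr (_ + _)%N.
  by apply: eq_card => y; rewrite inE eqxx.
have zero_out : 0 \notin [pred y : F | y ^+ d == x ^+ d].
  by rewrite inE expr0n gtn_eqF // eq_sym expf_neq0.
transitivity #|[predU1 0 & [pred y : F | y ^+ d == x ^+ d]]|.
  by apply: eq_card => y; rewrite !inE (negbTE x_neq0) [x ^+ d == _]eq_sym.
by rewrite cardU1 zero_out card_expr_eq.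
Qed.

End UnityRoots.

Section TraceCharacter.

Variables (F : finFieldType) (n : nat).
Hypothesis cardF : #|F| = (3 ^ n)%N.

Lemma pchar3 : 3 \in [pchar F].
Proof. exact: card_finPcharP cardF _. Qed.

Lemma absTrD (x y : F) : absTr (x + y) = absTr x + absTr y.
Proof. by rewrite /absTr -big_split; apply: eq_bigr => i _; rewrite (expr3nD pchar3). Qed.

Lemma absTr0 : absTr (0 : F) = 0.
Proof. by apply: (addrI (absTr 0)); rewrite -absTrD !addr0. Qed.

Lemma card_exp3S : exists k, #|F| = (3 ^ k.+1)%N.
Proof. by have := finNzRing_gt1 F; rewrite cardF; case: n => // k; exists k. Qed.

Lemma absTr_cube (x : F) : absTr x ^+ 3 = absTr x.
Proof.
have [k cardFk] := card_exp3S.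
rewrite /absTr cardFk pfactorK // -(Frobenius_autE pchar3) rmorph_sum /=.
under eq_bigr => i _ do rewrite Frobenius_autE -exprM -expnSr.
rewrite big_ord_recr big_ord_recl /= -cardFk expf_card expn0 expr1 addrC.
by congr (_ + _); apply: eq_bigr => i _; rewrite /bump add1n.
Qed.

Lemma absTr_natr (x : F) : exists k, absTr x = k%:R.
Proof.
have : absTr x * (absTr x - 1) * (absTr x + 1) == 0.
  set t := absTr x; have -> : t * (t - 1) * (t + 1) = t ^+ 3 - t by ring.
  by rewrite absTr_cube subrr.
rewrite !mulf_eq0 subr_eq0 addr_eq0 => /orP[/orP[]|] /eqP ->.
- by exists 0%N.
- by exists 1%N.
- by exists 2%N; apply/eqP; rewrite eq_sym -subr_eq0 opprK natr1 (pcharf0 pchar3).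
Qed.

Lemma absTr_neq0 : exists c : F, absTr c != 0.
Proof.
have [k Fk1] := card_exp3S.
pose p : {poly F} := \sum_(i < k.+1) 'X^(3 ^ i).
have pE x : p.[x] = absTr x.
  rewrite /p horner_sum /absTr Fk1 pfactorK //.
  by apply: eq_bigr => i _; rewrite hornerXn.
have p_neq0 : p != 0.
  apply/eqP => /(congr1 (fun q : {poly F} => q`_1)); rewrite coef0 /p coef_sum.
  rewrite big_ord_recl coefXn eqxx big1 ?addr0 => [/eqP|i _]; first by rewrite oner_eq0.
  by rewrite coefXn; case: eqP => // /esym /eqP; rewrite expnS muln_eq1.
have size_p : (size p <= #|F|)%N.
  apply: leq_trans (size_sum _ _ _) _; apply/bigmax_leqP => i _.
  by rewrite size_polyXn Fk1 ltn_exp2l.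
apply/existsP; apply: contraLR size_p; rewrite negb_exists => /forallP absTr_eq0.
rewrite -ltnNge cardE; apply: max_poly_roots p_neq0 _ (enum_uniq F).
by apply/allP => x _; rewrite /root pE; apply/negPn/absTr_eq0.
Qed.

Lemma chi3_natr (y : F) k : absTr y = k%:R -> chi3 y = xi3 ^+ k.
Proof.
move=> absTr_y; rewrite /chi3 absTr_y -(prim_expr_mod xi3_prim).
have k3_lt3 : (k %% 3 < 3)%N by rewrite ltn_mod.
rewrite (big_pred1 (Ordinal k3_lt3)) // => j /=.
by rewrite (natr_eq_mod_pchar _ _ pchar3) (modn_small (ltn_ord j)).
Qed.

Lemma chi3D (u v : F) : chi3 (u + v) = chi3 u * chi3 v.
Proof.
have [[k absTr_u] [l absTr_v]] := (absTr_natr u, absTr_natr v).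
rewrite (chi3_natr absTr_u) (chi3_natr absTr_v) -exprD.
by apply: chi3_natr; rewrite absTrD absTr_u absTr_v natrD.
Qed.

Lemma chi3_0 : chi3 (0 : F) = 1.
Proof. by rewrite (@chi3_natr _ 0) ?absTr0. Qed.

Lemma sum_chi3 : \sum_(a : F) chi3 a = 0.
Proof.
have [c absTr_c] := absTr_neq0; have [k absTr_ck] := absTr_natr c.
have chi3_c : chi3 c != 1.
  rewrite (chi3_natr absTr_ck) -(prim_order_dvd xi3_prim) (dvdn_pcharf pchar3).
  by rewrite -absTr_ck.
have : (1 - chi3 c) * \sum_(a : F) chi3 a = 0.
  rewrite mulrBl mul1r mulr_sumr {1}(reindex_inj (addrI c)) /=.
  by rewrite -sumrB big1 // => a _; rewrite chi3D subrr.
by move/eqP; rewrite mulf_eq0 subr_eq0 eq_sym (negbTE chi3_c) => /eqP.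
Qed.

Lemma sum_chi3_mul (s : F) :
  \sum_(a : F) chi3 (a * s) = if s == 0 then #|F|%:R else 0.
Proof.
have [->|s_neq0] := eqVneq s 0.
  by under eq_bigr => a _ do rewrite mulr0 chi3_0; rewrite sumr_const.
by rewrite -{2}sum_chi3 [RHS](reindex_inj (mulIf s_neq0)).
Qed.

Lemma sum_chi3_affine (c s : F) :
  \sum_(a : F) chi3 (c - a * s) = if s == 0 then chi3 c * #|F|%:R else 0.
Proof.
under eq_bigr => a _ do rewrite -mulrN chi3D.
by rewrite -mulr_sumr sum_chi3_mul oppr_eq0; case: eqP; rewrite ?mulr0.
Qed.

Lemma sum_chi3_mul_neq0 (s : F) :
  \sum_(b : F | b != 0) chi3 (b * s) = (if s == 0 then #|F|%:R else 0) - 1.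
Proof. by rewrite -sum_chi3_mul [in RHS](bigD1 0) //= mul0r chi3_0 [1 + _]addrC addrK. Qed.

Section WalshMoments.

Variable f : F -> F.

Lemma walsh_sqrE (a b : F) :
  walsh f a b ^+ 2 = \sum_x \sum_y chi3 (b * (f x + f y) - a * (x + y)).
Proof.
rewrite expr2 /walsh mulr_suml; apply: eq_bigr => x _; rewrite mulr_sumr.
by apply: eq_bigr => y _; rewrite -chi3D; congr chi3; ring.
Qed.

Lemma walsh_cubeE (a b : F) : walsh f a b ^+ 3
  = \sum_x \sum_y \sum_z chi3 (b * (f x + f y + f z) - a * (x + y + z)).
Proof.
rewrite exprS walsh_sqrE /walsh mulr_suml; apply: eq_bigr => x _.
rewrite mulr_sumr; apply: eq_bigr => y _; rewrite mulr_sumr.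
by apply: eq_bigr => z _; rewrite -chi3D; congr chi3; ring.
Qed.

Lemma sum_walsh (f0 : f 0 = 0) (b : F) : \sum_a walsh f a b = #|F|%:R.
Proof.
rewrite /walsh exchange_big /=.
under eq_bigr => x _ do rewrite sum_chi3_affine.
by rewrite (bigD1 0) //= big1 => [|x /negbTE ->//]; rewrite eqxx f0 mulr0 chi3_0 mul1r addr0.
Qed.

Lemma sum_walsh_sqr (f_odd : {morph f : x / - x}) (b : F) :
  \sum_a walsh f a b ^+ 2 = #|F|%:R ^+ 2.
Proof.
under eq_bigr => a _ do rewrite walsh_sqrE.
rewrite exchange_big /=; under eq_bigr => x _ do rewrite exchange_big /=.
under eq_bigr => x _ do under eq_bigr => y _ do rewrite sum_chi3_affine.
under eq_bigr => x _ do rewrite sum_if_add_eq0 f_odd subrr mulr0 chi3_0 mul1r.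
by rewrite sumr_const expr2 mulr_natr.
Qed.

Lemma sum_walsh_cube (f_odd : {morph f : x / - x}) (b : F) :
  \sum_a walsh f a b ^+ 3
  = #|F|%:R * \sum_x \sum_y chi3 (b * (f x + f y - f (x + y))).
Proof.
under eq_bigr => a _ do rewrite walsh_cubeE.
rewrite exchange_big /=; under eq_bigr => x _ do rewrite exchange_big /=.
under eq_bigr => x _ do under eq_bigr => y _ do rewrite exchange_big /=.
under eq_bigr => x _ do under eq_bigr => y _ do under eq_bigr => z _ do rewrite sum_chi3_affine.
rewrite mulr_sumr; apply: eq_bigr => x _; rewrite mulr_sumr; apply: eq_bigr => y _.
by rewrite sum_if_add_eq0 f_odd mulrC; congr (_ * chi3 _); ring.
Qed.

Lemma sum_walsh_sub1_cube (f0 : f 0 = 0) (f_odd : {morph f : x / - x}) (b : F) :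
  \sum_a (walsh f a b - 1) ^+ 3
  = #|F|%:R * \sum_x \sum_y chi3 (b * (f x + f y - f (x + y)))
    - 3%:R * #|F|%:R ^+ 2 + 2%:R * #|F|%:R.
Proof.
have cube_sub1 (w : algC) : (w - 1) ^+ 3 = w ^+ 3 - 3%:R * w ^+ 2 + 3%:R * w - 1.
  by ring.
under eq_bigr => a _ do rewrite cube_sub1.
rewrite !big_split /= !sumrN -!mulr_sumr.
rewrite sum_walsh_cube // sum_walsh_sqr // sum_walsh // sumr_const -mulr_natl.
by ring.
Qed.

Lemma sum_chi3_defect :
  \sum_(b | b != 0) \sum_x \sum_y chi3 (b * (f x + f y - f (x + y)))
  = #|F|%:R * (\sum_x #|[pred y : F | (f x + f y - f (x + y) == 0)%R]|)%:R - #|F|%:R ^+ 2.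
Proof.
rewrite exchange_big /=; under eq_bigr => x _ do rewrite exchange_big /=.
under eq_bigr => x _ do under eq_bigr => y _ do rewrite sum_chi3_mul_neq0.
under eq_bigr => x _ do rewrite sumrB -big_mkcond !sumr_const.
by rewrite sumrB sumrMnr sumr_const expr2 !mulr_natr.
Qed.

End WalshMoments.

End TraceCharacter.

Unset Implicit Arguments.

Theorem proposition11 (F : finFieldType) (m : nat) (hm : (0 < m)%N)
  (hF : #|F| = ((3 ^ m) ^ 2)%N) :
  \sum_(a : F) \sum_(b : F | b != 0)
     (walsh (fun x : F => x ^+ (3 ^ m + 2)) a b - 1) ^+ 3
  = ((3 ^ m)%:R : algC) ^+ 2 * (((3 ^ m)%:R : algC) ^+ 2 - 1)
    * (((3 ^ m)%:R : algC) ^+ 3 - 3%:R * ((3 ^ m)%:R : algC) ^+ 2 + 2%:R).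
Proof.
set q := (3 ^ m)%N in hF *.
have q_gt1 : (1 < q)%N by rewrite -{1}(expn0 3) ltn_exp2l.
have cardF : #|F| = (3 ^ (m * 2))%N by rewrite hF expnM.
set f := fun x : F => x ^+ (q + 2).
have f0 : f 0 = 0 by rewrite /f expr0n addn2.
have f_odd : {morph f : x / - x}.
  by move=> x; rewrite /f exprNn -signr_odd oddD oddX /= orbT expr1 mulN1r.
have zeros : (\sum_x #|[pred y : F | (f x + f y - f (x + y) == 0)%R]|)%N
             = (#|F| + #|F|.-1 * q)%N.
  rewrite -[q in RHS](prednK (ltnW q_gt1)) -sum_card_zero_or_expr_eq.
  - apply: eq_bigr => x _; apply: eq_card => y.
    by rewrite inE (power_map_defect_eq0 (pchar3 cardF)).
  - by rewrite -subn1 subn_gt0.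
  - by rewrite hF predn_exp dvdn_mulr.
rewrite exchange_big /=.
under eq_bigr => b _ do rewrite (sum_walsh_sub1_cube cardF f0 f_odd).
rewrite !big_split /= -mulr_sumr (sum_chi3_defect cardF) zeros sumrN !sumr_const cardC1.
have cardFR : #|F|%:R = q%:R ^+ 2 :> algC by rewrite hF natrX.
have cardF1R : #|F|.-1%:R = q%:R ^+ 2 - 1 :> algC.
  by rewrite -cardFR -[in RHS](ltn_predK (finNzRing_gt1 F)) -natr1 addrK.
rewrite -[3 * _ *+ _]mulr_natr -[2 * _ *+ _]mulr_natr natrD natrM.
by rewrite cardF1R cardFR; ring.
Qed.
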